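(* Let $Q$ be a loop. (i) If $N(Q)$ is a normal subloop of $Q$, then $Q/N(Q)$ is an abelian group if and only if for all $x,y,z,u,v\in Q$: $[[x,y,z],u,v]=[u,[x,y,z],v]=[u,v,[x,y,z]]=1$ and $[[x,y],z,u]=[z,[x,y],u]=[z,u,[x,y]]=1$. (ii) $Q/Z(Q)$ is a group if and only if for all $x,y,z,u,v\in Q$: $[[x,y,z],u,v]=[u,[x,y,z],v]=[u,v,[x,y,z]]=1$ and $[[x,y,z],u]=1$.
   Context: A loop $(Q,\cdot)$ is a set with a binary operation and an identity $1$ such that all left translations $L_x:y\mapsto xy$ and right translations $R_x:y\mapsto yx$ are bijections; $x\backslash y=yL_x^{-1}$. The associator is $[x,y,z]=(x\cdot yz)\backslash(xy\cdot z)$ and the commutator is $[x,y]=(yx)\backslash(xy)$ (juxtaposition denotes multiplication, e.g. $x\cdot yz=x\cdot(y\cdot z)$). $\mathrm{Inn}(Q)$ is the set of elements of $\langle L_x,R_x:x\in Q\rangle$ fixing $1$; a subloop $S$ (nonempty subset closed under multiplication and both divisions) is normal if $S\varphi=S$ for all $\varphi\in\mathrm{Inn}(Q)$, and then $Q/S$ is the loop of cosets $xS$ with $xS\cdot yS=(xy)S$. The nucleus is $N(Q)=\{a\in Q: ax\cdot y=a\cdot xy,\ xy\cdot a=x\cdot ya,\ xa\cdot y=x\cdot ay\ \forall x,y\in Q\}$, the commutant is $C(Q)=\{a: ax=xa\ \forall x\}$, and the center is $Z(Q)=C(Q)\cap N(Q)$, which is always a normal subloop. *)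

From Stdlib Require Import ClassicalEpsilon.

Record loop := Loop {
  carrier :> Type;
  mul : carrier -> carrier -> carrier;
  ldiv : carrier -> carrier -> carrier;   (* x \ y = y L_x^{-1} *)
  rdiv : carrier -> carrier -> carrier;   (* y / x = y R_x^{-1} *)
  one : carrier;
  mul1l : forall x, mul one x = x;
  mul1r : forall x, mul x one = x;
  mul_ldiv : forall x y, mul x (ldiv x y) = y;
  ldiv_mul : forall x y, ldiv x (mul x y) = y;
  mul_rdiv : forall x y, mul (rdiv y x) x = y;
  rdiv_mul : forall x y, rdiv (mul y x) x = y
}.

Arguments mul {l}.
Arguments ldiv {l}.
Arguments rdiv {l}.
Arguments one {l}.

Section LoopDefs.
Variable Q : loop.

Definition assoc (x y z : Q) : Q := ldiv (mul x (mul y z)) (mul (mul x y) z).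
Definition comm (x y : Q) : Q := ldiv (mul y x) (mul x y).

(* Multiplication group Mlt(Q) = < L_x, R_x : x in Q > (group generated,
   hence closed under inverses L_x^{-1}, R_x^{-1}). *)
Inductive mlt : (Q -> Q) -> Prop :=
| mlt_id : mlt (fun y => y)
| mlt_L x : mlt (fun y => mul x y)
| mlt_R x : mlt (fun y => mul y x)
| mlt_Linv x : mlt (fun y => ldiv x y)
| mlt_Rinv x : mlt (fun y => rdiv y x)
| mlt_comp f g : mlt f -> mlt g -> mlt (fun y => g (f y)).

Definition inn (f : Q -> Q) : Prop := mlt f /\ f one = one.

Definition subloop (S : Q -> Prop) : Prop :=
  (exists s, S s) /\
  (forall x y, S x -> S y -> S (mul x y)) /\
  (forall x y, S x -> S y -> S (ldiv x y)) /\
  (forall x y, S x -> S y -> S (rdiv x y)).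

Definition normal (S : Q -> Prop) : Prop :=
  subloop S /\
  forall f, inn f ->
    (forall x, S x -> S (f x)) /\ (forall y, S y -> exists x, S x /\ f x = y).

Definition nucleus (a : Q) : Prop :=
  forall x y,
    mul (mul a x) y = mul a (mul x y) /\
    mul (mul x y) a = mul x (mul y a) /\
    mul (mul x a) y = mul x (mul a y).

Definition commutant (a : Q) : Prop := forall x, mul a x = mul x a.

Definition center (a : Q) : Prop := commutant a /\ nucleus a.

(* Quotient Q/S: the set of left cosets xS, with xS . yS = (xy)S
   (computed through chosen representatives). *)
Definition coset (S : Q -> Prop) (x : Q) : Q -> Prop :=
  fun y => exists s, S s /\ y = mul x s.

Definition cosets (S : Q -> Prop) : Type :=
  { A : Q -> Prop | exists x, A = coset S x }.

Definition rep (S : Q -> Prop) (A : cosets S) : Q :=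
  proj1_sig (constructive_indefinite_description _ (proj2_sig A)).

Definition qmk (S : Q -> Prop) (x : Q) : cosets S :=
  exist _ (coset S x) (ex_intro _ x eq_refl).

Definition qmul (S : Q -> Prop) (A B : cosets S) : cosets S :=
  qmk S (mul (rep S A) (rep S B)).

(* the quotient loop Q/S is a group (i.e. associative) *)
Definition quot_group (S : Q -> Prop) : Prop :=
  forall A B C : cosets S, qmul S (qmul S A B) C = qmul S A (qmul S B C).

Definition quot_abgroup (S : Q -> Prop) : Prop :=
  quot_group S /\ forall A B : cosets S, qmul S A B = qmul S B A.

End LoopDefs.

Arguments assoc {Q}.
Arguments comm {Q}.

(* Let S be a subloop of the nucleus, closed under inverses, with xS.y contained in (xy)S.
   Then "lies in a common left coset of S" is a congruence, the coset loop is the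
   quotient, and a product identity holds in Q/S exactly when the left division of its
   two sides lies in S. So Q/S is a group iff every associator lies in S, and it is
   commutative iff every commutator does. Membership in the nucleus is the vanishing of
   three associators, and membership in the center adds one commutator. Both N(Q) (when
   normal) and Z(Q) satisfy the hypotheses on S. *)

From Stdlib Require Import ClassicalEpsilon FunctionalExtensionality PropExtensionality ProofIrrelevance.

Section LoopFacts.
Variable Q : loop.

Lemma ldiv_eq_one (p q : Q) : ldiv p q = one <-> q = p.
Proof.
  split; intro H.
  - rewrite <- (mul_ldiv Q p q), H, mul1r. reflexivity.
  - rewrite H. rewrite <- (mul1r Q p) at 2. apply ldiv_mul.
Qed.

Lemma assoc_eq_one (x y z : Q) : assoc x y z = one <-> mul (mul x y) z = mul x (mul y z).
Proof. apply ldiv_eq_one. Qed.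

Lemma comm_eq_one (x y : Q) : comm x y = one <-> mul x y = mul y x.
Proof. apply ldiv_eq_one. Qed.

Lemma mulI (a x y : Q) : mul a x = mul a y -> x = y.
Proof. intro H. rewrite <- (ldiv_mul Q a x), H. apply ldiv_mul. Qed.

Lemma mulIr (a x y : Q) : mul x a = mul y a -> x = y.
Proof. intro H. rewrite <- (rdiv_mul Q a x), H. apply rdiv_mul. Qed.

Lemma nucleus_assoc (a : Q) : nucleus Q a <->
  forall u v, assoc a u v = one /\ assoc u a v = one /\ assoc u v a = one.
Proof.
  unfold nucleus. setoid_rewrite assoc_eq_one.
  split; intros H u v; destruct (H u v) as [? [? ?]]; auto.
Qed.

Lemma nucleus_mul (a b : Q) : nucleus Q a -> nucleus Q b -> nucleus Q (mul a b).
Proof.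
  intros Na Nb x y. repeat split.
  - rewrite (proj1 (Na b x)), (proj1 (Na (mul b x) y)), (proj1 (Nb x y)),
      (proj1 (Na b (mul x y))). reflexivity.
  - rewrite <- (proj1 (proj2 (Nb (mul x y) a))), (proj1 (proj2 (Na x y))),
      (proj1 (proj2 (Nb x (mul y a)))), (proj1 (proj2 (Nb y a))). reflexivity.
  - rewrite <- (proj1 (proj2 (Nb x a))), (proj2 (proj2 (Nb (mul x a) y))),
      (proj2 (proj2 (Na x (mul b y)))), (proj1 (Na b y)). reflexivity.
Qed.

Lemma nucleus_inv (a : Q) : nucleus Q a -> nucleus Q (ldiv a one).
Proof.
  intros Na. set (a' := ldiv a one).
  assert (aa' : mul a a' = one) by apply mul_ldiv.
  assert (a'a : mul a' a = one).
  { apply (mulI a). rewrite <- (proj1 (Na a' a)), aa', mul1l, mul1r. reflexivity. }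
  intros x y. repeat split.
  - apply (mulI a). rewrite <- (proj1 (Na (mul a' x) y)), <- (proj1 (Na a' x)),
      <- (proj1 (Na a' (mul x y))), aa', !mul1l. reflexivity.
  - apply (mulIr a). rewrite (proj1 (proj2 (Na (mul x y) a'))), (proj1 (proj2 (Na x (mul y a')))),
      (proj1 (proj2 (Na y a'))), a'a, !mul1r. reflexivity.
  - assert (Ex : x = mul (mul x a') a)
      by (rewrite (proj1 (proj2 (Na x a'))), a'a, mul1r; reflexivity).
    rewrite Ex at 2. rewrite (proj2 (proj2 (Na (mul x a') (mul a' y)))),
      <- (proj1 (Na a' y)), aa', mul1l. reflexivity.
Qed.

Lemma center_one : center Q one.
Proof.
  split.
  - intro x. rewrite mul1l, mul1r. reflexivity.
  - intros x y. rewrite !mul1l, !mul1r. repeat split; reflexivity.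
Qed.

Lemma center_mul (a b : Q) : center Q a -> center Q b -> center Q (mul a b).
Proof.
  intros [Ca Na] [Cb Nb]. split; [|exact (nucleus_mul a b Na Nb)].
  intro x. rewrite (proj1 (Na b x)), (Cb x), <- (proj1 (Na x b)), (Ca x),
    (proj2 (proj2 (Na x b))). reflexivity.
Qed.

Lemma center_inv (a : Q) : center Q a -> center Q (ldiv a one).
Proof.
  intros [Ca Na]. split; [|exact (nucleus_inv a Na)].
  intro x. apply (mulI a).
  rewrite <- (proj1 (Na (ldiv a one) x)), <- (proj1 (Na x (ldiv a one))), (Ca x),
    (proj2 (proj2 (Na x (ldiv a one)))), mul_ldiv, mul1l, mul1r. reflexivity.
Qed.

Lemma center_right_shift (x y s : Q) : center Q s -> mul (mul x s) y = mul (mul x y) s.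
Proof.
  intros [Cs Ns]. rewrite (proj2 (proj2 (Ns x y))), Cs, (proj1 (proj2 (Ns x y))).
  reflexivity.
Qed.

Lemma normal_right_shift (S : Q -> Prop) (x y s : Q) : normal Q S -> S s ->
  exists t, S t /\ mul (mul x s) y = mul (mul x y) t.
Proof.
  intros [_ HS] Ss.
  set (f := fun s0 : Q => ldiv (mul x y) (mul (mul x s0) y)).
  assert (If : inn Q f).
  { split.
    - exact (mlt_comp Q _ _ (mlt_comp Q _ _ (mlt_L Q x) (mlt_R Q y)) (mlt_Linv Q (mul x y))).
    - apply ldiv_eq_one. rewrite mul1r. reflexivity. }
  exists (f s). split.
  - exact (proj1 (HS f If) s Ss).
  - unfold f. rewrite mul_ldiv. reflexivity.
Qed.

End LoopFacts.

Section Quotient.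
Variable Q : loop.
Variable S : Q -> Prop.
Hypothesis S_one : S one.
Hypothesis S_mul : forall s t, S s -> S t -> S (mul s t).
Hypothesis S_inv : forall s, S s -> S (ldiv s one).
Hypothesis S_nucleus : forall s, S s -> nucleus Q s.
Hypothesis S_right_shift : forall x y s, S s ->
  exists t, S t /\ mul (mul x s) y = mul (mul x y) t.

Local Notation eqmod := (coset Q S).

Lemma eqmod_refl x : eqmod x x.
Proof. exists one. split; [exact S_one | rewrite mul1r; reflexivity]. Qed.

Lemma eqmod_trans x y z : eqmod x y -> eqmod y z -> eqmod x z.
Proof.
  intros [s [Hs ->]] [t [Ht ->]]. exists (mul s t). split; [auto|].
  exact (proj2 (proj2 (S_nucleus s Hs x t))).
Qed.

Lemma eqmod_sym x y : eqmod x y -> eqmod y x.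
Proof.
  intros [s [Hs ->]]. exists (ldiv s one). split; [auto|].
  rewrite (proj2 (proj2 (S_nucleus s Hs x (ldiv s one)))), mul_ldiv, mul1r. reflexivity.
Qed.

Lemma eqmod_mul a a' b b' : eqmod a a' -> eqmod b b' -> eqmod (mul a b) (mul a' b').
Proof.
  intros Ha [t [Ht ->]]. apply eqmod_trans with (mul a' b).
  - destruct Ha as [s [Hs ->]]. destruct (S_right_shift a b s Hs) as [u [Hu E]].
    exists u. split; auto.
  - exists t. split; auto. symmetry. exact (proj1 (proj2 (S_nucleus t Ht a' b))).
Qed.

Lemma eqmod_ldiv x y : eqmod x y <-> S (ldiv x y).
Proof.
  split.
  - intros [s [Hs ->]]. rewrite ldiv_mul. exact Hs.
  - intro H. exists (ldiv x y). split; auto. rewrite mul_ldiv. reflexivity.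
Qed.

Lemma coset_eq x y : eqmod x y -> coset Q S x = coset Q S y.
Proof.
  intro H. apply functional_extensionality. intro z. apply propositional_extensionality.
  split; intro Hz.
  - exact (eqmod_trans _ _ _ (eqmod_sym _ _ H) Hz).
  - exact (eqmod_trans _ _ _ H Hz).
Qed.

Lemma qmk_eq x y : qmk Q S x = qmk Q S y <-> S (ldiv y x).
Proof.
  rewrite <- eqmod_ldiv. split; intro H.
  - assert (E : coset Q S x = coset Q S y) by exact (f_equal (@proj1_sig _ _) H).
    apply eqmod_sym. rewrite E. apply eqmod_refl.
  - unfold qmk. apply eq_sig_hprop; [intros; apply proof_irrelevance|].
    apply coset_eq, eqmod_sym, H.
Qed.

Lemma qmk_surj (A : cosets Q S) : exists a, A = qmk Q S a.
Proof.
  exists (rep Q S A). destruct A as [A HA]. unfold rep, qmk. simpl.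
  destruct (constructive_indefinite_description _ HA) as [a Ha]. simpl.
  apply eq_sig_hprop; [intros; apply proof_irrelevance | exact Ha].
Qed.

Lemma rep_qmk x : eqmod (rep Q S (qmk Q S x)) x.
Proof.
  unfold rep. destruct (constructive_indefinite_description _ _) as [r Hr]. simpl in *.
  change (coset Q S r x). rewrite <- Hr. apply eqmod_refl.
Qed.

Lemma qmul_qmk x y : qmul Q S (qmk Q S x) (qmk Q S y) = qmk Q S (mul x y).
Proof.
  apply qmk_eq, eqmod_ldiv, eqmod_sym, eqmod_mul; apply rep_qmk.
Qed.

Lemma quot_group_assoc : quot_group Q S <-> forall x y z, S (assoc x y z).
Proof.
  split.
  - intros H x y z. apply qmk_eq.
    specialize (H (qmk Q S x) (qmk Q S y) (qmk Q S z)). rewrite !qmul_qmk in H.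
    exact H.
  - intros H A B C.
    destruct (qmk_surj A) as [a ->], (qmk_surj B) as [b ->], (qmk_surj C) as [c ->].
    rewrite !qmul_qmk. apply qmk_eq, H.
Qed.

Lemma quot_comm_comm : (forall A B : cosets Q S, qmul Q S A B = qmul Q S B A)
  <-> forall x y, S (comm x y).
Proof.
  split.
  - intros H x y. apply qmk_eq.
    specialize (H (qmk Q S x) (qmk Q S y)). rewrite !qmul_qmk in H. exact H.
  - intros H A B. destruct (qmk_surj A) as [a ->], (qmk_surj B) as [b ->].
    rewrite !qmul_qmk. apply qmk_eq, H.
Qed.

End Quotient.

Theorem lemma2 (Q : loop) :
  (normal Q (nucleus Q) ->
     (quot_abgroup Q (nucleus Q) <->
      forall x y z u v : Q,
        assoc (assoc x y z) u v = one /\ assoc u (assoc x y z) v = one /\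
        assoc u v (assoc x y z) = one /\
        assoc (comm x y) z u = one /\ assoc z (comm x y) u = one /\
        assoc z u (comm x y) = one)) /\
  (quot_group Q (center Q) <->
      forall x y z u v : Q,
        assoc (assoc x y z) u v = one /\ assoc u (assoc x y z) v = one /\
        assoc u v (assoc x y z) = one /\
        comm (assoc x y z) u = one).
Proof.
  split.
  - intro Hnormal.
    pose proof (fun x y s => normal_right_shift Q (nucleus Q) x y s Hnormal) as Hshift.
    pose proof (proj2 (center_one Q)) as N1.
    unfold quot_abgroup.
    rewrite (quot_group_assoc Q _ N1 (nucleus_mul Q) (nucleus_inv Q) (fun _ H => H) Hshift),
      (quot_comm_comm Q _ N1 (nucleus_mul Q) (nucleus_inv Q) (fun _ H => H) Hshift).
    setoid_rewrite nucleus_assoc. split.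
    + intros [HA HC] x y z u v.
      destruct (HA x y z u v) as [? [? ?]], (HC x y z u) as [? [? ?]]. tauto.
    + intro H. split.
      * intros x y z u v. destruct (H x y z u v) as [? [? [? _]]]. auto.
      * intros x y z u. destruct (H x y z u u) as [_ [_ [_ ?]]]. auto.
  - assert (Hshift : forall x y s, center Q s ->
        exists t, center Q t /\ mul (mul x s) y = mul (mul x y) t)
      by (intros x y s Hs; exists s; split; [exact Hs | apply center_right_shift, Hs]).
    rewrite (quot_group_assoc Q _ (center_one Q) (center_mul Q) (center_inv Q)
      (fun _ H => proj2 H) Hshift).
    unfold center, commutant. setoid_rewrite nucleus_assoc. setoid_rewrite comm_eq_one.
    split.
    + intros H x y z u v. destruct (H x y z) as [C N]. destruct (N u v) as [? [? ?]]. auto.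
    + intros H x y z. split.
      * intro u. apply (H x y z u u).
      * intros u v. destruct (H x y z u v) as [? [? [? _]]]. auto.
Qed.
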